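(* Consider $n$ agents over a fixed directed graph with nonnegative weights $a_{ij}$ ($a_{ij}>0$ iff $j\in N_i$) that has a spanning tree, with Laplacian $L$ whose eigenvalues are $\lambda_1(L)=0$ (simple) and $\lambda_2(L),\dots,\lambda_n(L)$ (positive real parts). Let $0<h<\min_{2\le i\le n}\frac{2\,\mathrm{Re}(\lambda_i(L))}{|\lambda_i(L)|^2}$. The states $x_i(t)\in\mathbb{R}^m$ evolve by $x_i(t+1)=x_i(t)+u_i(t)$ with $$y_i(t)=x_i(t)+h\sum_{j\in N_i}a_{ij}(x_j(t)-x_i(t)),\ \nabla_i(t)=\beta(t)\nabla g_i^+(y_i(t)),\ \xi_i(t)=y_i(t)-\nabla_i(t),$$ $$\varphi_i(t)=\alpha(t)\big(\xi_i(t)-P_{X_i}(\xi_i(t))\big),\ \phi_i(t)=-\nabla_i(t)-\varphi_i(t),\ u_i(t)=h\sum_{j\in N_i}a_{ij}(x_j(t)-x_i(t))+\phi_i(t),$$ for given real sequences $\alpha(t),\beta(t)$. If $\lim_{t\to\infty}\phi_i(t)=0$ for every $i$, then the agents reach consensus asymptotically, i.e. $\lim_{t\to\infty}\|x_i(t)-x_j(t)\|=0$ for all $i,j$.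
   Context: $g_i:\mathbb{R}^m\to\mathbb{R}$ convex continuous, $X_i\subset\mathbb{R}^m$ closed convex, $g_i^+=\max[g_i,0]$, $\nabla g_i^+(y)$ a subgradient of $g_i^+$ at $y$, $P_{X_i}$ Euclidean projection onto $X_i$. Laplacian $L=(l_{ij})$: $l_{ij}=-a_{ij}$ for $i\neq j$, $l_{ii}=\sum_j a_{ij}$. A spanning tree is a subset of edges forming a directed tree that connects all nodes. *)

From HB Require Import structures.
From mathcomp Require Import all_boot all_order all_algebra.
From mathcomp Require Import all_classical all_reals all_analysis.
From mathcomp Require Export complex.
Set Implicit Arguments.
Unset Strict Implicit.
Unset Printing Implicit Defensive.
Import Order.TTheory GRing.Theory Num.Theory.
Local Open Scope ring_scope.
Local Open Scope classical_set_scope.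

Section Defs.
Variable R : realType.

Definition dotv (m : nat) (u v : 'rV[R]_m) : R := \sum_(k < m) u 0 k * v 0 k.
Definition enorm (m : nat) (v : 'rV[R]_m) : R := Num.sqrt (dotv v v).

Definition convex_setv (m : nat) (X : set 'rV[R]_m) : Prop :=
  forall x y t, X x -> X y -> 0 <= t <= 1 -> X (t *: x + (1 - t) *: y).
Definition convex_funv (m : nat) (f : 'rV[R]_m -> R) : Prop :=
  forall x y t, 0 <= t <= 1 ->
    f (t *: x + (1 - t) *: y) <= t * f x + (1 - t) * f y.

Definition pos_part (m : nat) (f : 'rV[R]_m -> R) : 'rV[R]_m -> R :=
  fun y => Num.max (f y) 0.

Definition is_subgradient (m : nat) (f : 'rV[R]_m -> R) (y d : 'rV[R]_m) : Prop :=
  forall z, f y + dotv d (z - y) <= f z.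

Definition is_proj (m : nat) (X : set 'rV[R]_m) (v p : 'rV[R]_m) : Prop :=
  X p /\ forall z, X z -> enorm (v - p) <= enorm (v - z).

Definition laplacian (n : nat) (a : 'M[R]_n) : 'M[R]_n :=
  \matrix_(i, j) (if i == j then \sum_(k < n) a i k else - a i j).

(* a_ij > 0 iff j in N_i, i.e. there is an edge j -> i (i receives from j).
   The digraph has a (directed) spanning tree iff some root node reaches every
   node along directed edges. *)
Definition edge (n : nat) (a : 'M[R]_n) : rel 'I_n := fun j i => 0 < a i j.
Definition has_spanning_tree (n : nat) (a : 'M[R]_n) : Prop :=
  exists r : 'I_n, forall i : 'I_n, connect (edge a) r i.

Definition eigenvalueC (n : nat) (L : 'M[R]_n) (z : R[i]) : bool :=
  root (map_poly (real_complex R) (char_poly L)) z.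

Section Protocol.
Variables (n m : nat) (a : 'M[R]_n) (h : R) (alpha beta : nat -> R).
Variables (dg : 'I_n -> 'rV[R]_m -> 'rV[R]_m) (P : 'I_n -> 'rV[R]_m -> 'rV[R]_m).
Variable x : nat -> 'I_n -> 'rV[R]_m.

Definition cons_term (t : nat) (i : 'I_n) : 'rV[R]_m :=
  \sum_(j < n) a i j *: (x t j - x t i).
Definition y_ (t : nat) (i : 'I_n) := x t i + h *: cons_term t i.
Definition nabla_ (t : nat) (i : 'I_n) := beta t *: dg i (y_ t i).
Definition xi_ (t : nat) (i : 'I_n) := y_ t i - nabla_ t i.
Definition varphi_ (t : nat) (i : 'I_n) := alpha t *: (xi_ t i - P i (xi_ t i)).
Definition phi_ (t : nat) (i : 'I_n) := - nabla_ t i - varphi_ t i.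
Definition u_ (t : nat) (i : 'I_n) := h *: cons_term t i + phi_ t i.
End Protocol.

End Defs.

(* Fix a coordinate and stack the agents' values into v_t: the protocol reads
   v_{t+1} = (I - hL) v_t + w_t with w_t -> 0, hence L v_t obeys the same
   recursion driven by L w_t -> 0.  Over C, Cayley-Hamilton together with the
   absence of Jordan blocks of L at 0 (L^2 u = 0 -> L u = 0, by a maximum
   principle along the spanning tree) gives L * prod_{lambda <> 0} (L - lambda) = 0.
   The factors are peeled off one at a time: if (L - lambda) Y_t -> 0 then
   Y_{t+1} = (1 - h lambda) Y_t + o(1), and |1 - h lambda|^2
   = 1 - 2h Re lambda + h^2 |lambda|^2 < 1 is exactly the step-size condition.
   So L v_t -> 0, and v_t(i) - v_t(j) -> 0 because e_i - e_j lies in the row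
   space of L, whose left kernel consists of the constant vectors. *)

From HB Require Import structures.
From mathcomp Require Import all_boot all_order all_algebra.
From mathcomp Require Import all_classical all_reals all_analysis.
From mathcomp Require Import complex.
From mathcomp Require Import ring lra zify.
Set Implicit Arguments.
Unset Strict Implicit.
Unset Printing Implicit Defensive.

Import Order.TTheory GRing.Theory Num.Theory numFieldNormedType.Exports.
Local Open Scope ring_scope.
Local Open Scope classical_set_scope.

Section VanishingSequences.
Variable R : realType.
Local Notation C := R[i].
Local Notation normc := (@Normc.normc R).

Lemma cvgr0_le (V : pseudoMetricNormedZmodType R) (f : nat -> V) (r : nat -> R) :
  (forall t, `|f t| <= r t) -> r @ \oo --> 0 -> f @ \oo --> 0.
Proof.
move=> fr r0; apply/norm_cvg0P/(squeeze_cvgr _ (cvg_cst 0) r0).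
by apply: nearW => t; rewrite normr_ge0 fr.
Qed.

Lemma cvg0_sum (I : Type) (r : seq I) (F : I -> nat -> R) :
  (forall i, F i @ \oo --> 0) -> (fun t => \sum_(i <- r) F i t) @ \oo --> 0.
Proof.
move=> F0; elim: r => [|i r IH].
  by under eq_fun do rewrite big_nil; exact: cvg_cst.
under eq_fun do rewrite big_cons.
have := cvgD (F0 i) IH; rewrite addr0; exact.
Qed.

Lemma cvg0_contraction (a b : nat -> R) (q : R) : 0 <= q < 1 ->
  (forall t, 0 <= a t) -> (forall t, a t.+1 <= q * a t + b t) ->
  b @ \oo --> 0 -> a @ \oo --> 0.
Proof.
move=> /andP[q_ge0 q_lt1] a_ge0 a_rec b0.
apply/cvgr0Pnorm_lt => e e_gt0.
have e2_gt0 : 0 < e / 2 by rewrite divr_gt0.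
have q1_gt0 : 0 < 1 - q by rewrite subr_gt0.
have [N _ bN] := cvgr0_norm_le _ b0 _ (mulr_gt0 q1_gt0 e2_gt0).
have aNk k : a (N + k)%N <= q ^+ k * a N + e / 2.
  elim: k => [|k IH]; first by rewrite expr0 mul1r addn0 lerDl ltW.
  have bNk : b (N + k)%N <= (1 - q) * (e / 2).
    by apply: le_trans (ler_norm _) (bN _ _); rewrite /= leq_addr.
  rewrite addnS (le_trans (a_rec _)) // exprSr -mulrA.
  by nra.
have aN1_gt0 : 0 < a N + 1 by rewrite ltr_pwDr.
have q_norm_lt1 : `|q| < 1 by rewrite ger0_norm.
have [K _ qK] := cvgr0_norm_lt _ (cvg_expr q_norm_lt1) _
  (divr_gt0 e2_gt0 aN1_gt0).
exists (N + K)%N => // t /= NKt.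
have {NKt}[k -> Kk] : exists2 k, t = (N + k)%N & (K <= k)%N.
  by exists (t - N)%N; lia.
rewrite ger0_norm // (le_lt_trans (aNk k)) // [e in _ < e]splitr ltrD2r.
have := qK k Kk; rewrite /= ger0_norm ?exprn_ge0 // ltr_pdivlMr //.
by apply: le_lt_trans; rewrite ler_wpM2l ?exprn_ge0 ?lerDl.
Qed.

Lemma normc_ge0 (z : C) : 0 <= normc z.
Proof. exact: (@normr_ge0 _ (Rcomplex R)). Qed.

Definition vanishes (s : nat -> C) := (fun t => normc (s t)) @ \oo --> (0 : R).

Lemma vanishes0 : vanishes (fun=> 0).
Proof. by rewrite /vanishes Normc.normc0; exact: cvg_cst. Qed.

Lemma vanishes_le (s r : nat -> C) :
  vanishes r -> (forall t, normc (s t) <= normc (r t)) -> vanishes s.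
Proof. by move=> r0 sr; apply: cvgr0_le r0 => t; rewrite ger0_norm ?normc_ge0. Qed.

Lemma vanishesD (s r : nat -> C) :
  vanishes s -> vanishes r -> vanishes (fun t => s t + r t).
Proof.
move=> s0 r0; apply: (@cvgr0_le _ _ (fun t => normc (s t) + normc (r t))).
  by move=> t; rewrite ger0_norm ?normc_ge0 ?le_normcD.
by have := cvgD s0 r0; rewrite addr0; exact.
Qed.

Lemma vanishesMl (c : C) (s : nat -> C) : vanishes s -> vanishes (fun t => c * s t).
Proof.
move=> s0; rewrite /vanishes; under eq_fun do rewrite Normc.normcM.
by have := cvgM (cvg_cst (normc c)) s0; rewrite mulr0; exact.
Qed.

Lemma vanishes_sum (I : Type) (r : seq I) (F : I -> nat -> C) :
  (forall i, vanishes (F i)) -> vanishes (fun t => \sum_(i <- r) F i t).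
Proof.
move=> F0; elim: r => [|i r IH].
  by under eq_fun do rewrite big_nil; exact: vanishes0.
by under eq_fun do rewrite big_cons; exact: vanishesD.
Qed.

Lemma vanishes_real (s : nat -> R) : s @ \oo --> 0 -> vanishes (fun t => (s t)%:C%C).
Proof.
move=> s0; rewrite /vanishes.
under eq_fun do rewrite /Normc.normc /= expr0n addr0 sqrtr_sqr.
by have := cvg_norm s0; rewrite normr0; exact.
Qed.

Lemma vanishes_Re (s : nat -> C) :
  vanishes s -> (fun t => complex.Re (s t)) @ \oo --> 0.
Proof.
apply: cvgr0_le => t; case: (s t) => u v; rewrite /Normc.normc /=.
by rewrite -sqrtr_sqr ler_sqrt ?addr_ge0 ?sqr_ge0 // lerDl sqr_ge0.
Qed.

Lemma vanishes_contraction (s g : nat -> C) (mu : C) : normc mu < 1 ->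
  (forall t, s t.+1 = mu * s t + g t) -> vanishes g -> vanishes s.
Proof.
move=> mu_lt1 s_rec; apply: (@cvg0_contraction _ _ (normc mu)).
- by rewrite normc_ge0 mu_lt1.
- by move=> t; exact: normc_ge0.
- by move=> t; rewrite s_rec -Normc.normcM le_normcD.
Qed.

Definition vanishes_mx p q (Y : nat -> 'M[C]_(p, q)) :=
  forall i j, vanishes (fun t => Y t i j).

Lemma vanishes_mx_mull p q s (A : 'M[C]_(p, q)) (Y : nat -> 'M[C]_(q, s)) :
  vanishes_mx Y -> vanishes_mx (fun t => A *m Y t).
Proof.
move=> Y0 i j; under eq_fun do rewrite mxE.
by apply: vanishes_sum => k; exact: vanishesMl.
Qed.

End VanishingSequences.

Lemma connect_back_closed (T : finType) (e : rel T) (S : pred T) :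
  (forall x y, e x y -> S y -> S x) -> forall x y, connect e x y -> S y -> S x.
Proof.
move=> S_back x y /connectP[p + ->]; elim: p x => [|z p IH] x //= /andP[xz zp].
by move/(IH z zp); exact: S_back.
Qed.

Section Laplacian.
Variables (R : realType) (n : nat) (a : 'M[R]_n) (r : 'I_n).
Hypotheses (a_ge0 : forall i j, 0 <= a i j) (a_diag0 : forall i, a i i = 0).
Hypothesis r_root : forall i, connect (edge a) r i.
Local Notation L := (laplacian a).

Lemma laplacian_mulmx (u : 'cV[R]_n) i :
  (L *m u) i 0 = \sum_j a i j * (u i 0 - u j 0).
Proof.
have Lij j : L i j = (i == j)%:R * \sum_k a i k - a i j.
  by rewrite mxE; case: eqP => [<-|_]; rewrite ?a_diag0 /=; ring.
have diag F : \sum_j (i == j)%:R * F j = F i :> R.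
  rewrite (bigD1 i) //= eqxx mul1r big1 ?addr0 // => j.
  by rewrite eq_sym => /negPf ->; rewrite mul0r.
rewrite mxE; under eq_bigr => j _ do rewrite Lij mulrBl -mulrA.
by rewrite sumrB diag mulr_suml -sumrB; apply: eq_bigr => j _; rewrite mulrBr.
Qed.

Lemma laplacian_ker_max (u : 'cV[R]_n) : L *m u = 0 -> forall i, u i 0 <= u r 0.
Proof.
move=> Lu0 i.
have [i1 _ i1_max] := @arg_maxP _ _ _ r xpredT (fun j => u j 0) erefl.
suff -> : u r 0 = u i1 0 by exact: i1_max.
(* Where u is maximal, (L u)_k = 0 is a sum of nonnegative terms, so the
   maximum propagates to every in-neighbour of k, hence back to the root. *)
apply/eqP.
apply: (@connect_back_closed _ _ (fun j => u j 0 == u i1 0)) (r_root i1) _ => //.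
move=> j k akj /eqP uk.
move/matrixP/(_ k 0): Lu0; rewrite laplacian_mulmx mxE => /eqP.
rewrite psumr_eq0 => [/allP/(_ j (mem_index_enum _))|l _]; last first.
  by rewrite mulr_ge0 // subr_ge0 uk; exact: i1_max.
by rewrite mulf_eq0 gt_eqF //= subr_eq0 uk eq_sym.
Qed.

Lemma laplacian_ker_const (u : 'cV[R]_n) : L *m u = 0 -> forall i j, u i 0 = u j 0.
Proof.
move=> Lu0.
have ur i : u i 0 = u r 0.
  apply/eqP; rewrite eq_le laplacian_ker_max //=.
  have := @laplacian_ker_max (- u); rewrite mulmxN Lu0 oppr0 => /(_ erefl i).
  by rewrite !mxE lerN2.
by move=> i j; rewrite !ur.
Qed.

Lemma laplacian_sqr_ker (u : 'cV[R]_n) : L *m (L *m u) = 0 -> L *m u = 0.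
Proof.
move=> LLu0; have Lu_const := laplacian_ker_const LLu0.
have [imax _ imax_max] := @arg_maxP _ _ _ r xpredT (fun j => u j 0) erefl.
have [imin _ imin_min] := @arg_minP _ _ _ r xpredT (fun j => u j 0) erefl.
have Lu_imax : 0 <= (L *m u) imax 0.
  rewrite laplacian_mulmx sumr_ge0 // => j _.
  by rewrite mulr_ge0 // subr_ge0; exact: imax_max.
have Lu_imin : (L *m u) imin 0 <= 0.
  rewrite laplacian_mulmx sumr_le0 // => j _.
  by rewrite mulr_ge0_le0 // subr_le0; exact: imin_min.
apply/matrixP => i j; rewrite ord1 [RHS]mxE; apply/eqP; rewrite eq_le.
by rewrite {1}(Lu_const i imin) Lu_imin (Lu_const i imax) Lu_imax.
Qed.

Lemma laplacian_sqr_ker_mx p (B : 'M[R]_(n, p)) : L *m (L *m B) = 0 -> L *m B = 0.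
Proof.
move=> LLB0; apply/matrixP => i j.
have := @laplacian_sqr_ker (col j B); rewrite !colE !mulmxA -(mulmxA L L) LLB0.
by rewrite mul0mx => /(_ erefl)/matrixP/(_ i 0); rewrite -colE !mxE.
Qed.

Lemma delta_diff_sub_laplacian (i j : 'I_n) :
  ((delta_mx 0 i - delta_mx 0 j : 'rV[R]_n) <= L)%MS.
Proof.
pose ones : 'cV[R]_n := const_mx 1.
have L_ones : L *m ones = 0.
  apply/matrixP => k l; rewrite ord1 laplacian_mulmx !mxE big1 // => s _.
  by rewrite !mxE subrr mulr0.
have rank_ones : \rank ones = 1%N.
  apply/eqP; rewrite eqn_leq rank_leq_col lt0n mxrank_eq0.
  by apply/eqP => /matrixP/(_ r 0)/eqP; rewrite !mxE oner_eq0.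
have left_ker : (kermx L^T <= ones^T)%MS.
  apply/row_subP => k; set u := row k (kermx L^T).
  have uLT : u *m L^T = 0 by apply/sub_kermxP; exact: row_sub.
  have Lu : L *m u^T = 0 by rewrite -[L]trmxK -trmx_mul uLT trmx0.
  suff -> : u = u 0 r *: ones^T by exact: scalemx_sub.
  apply/matrixP => x y; rewrite ord1 !mxE mulr1.
  by have := laplacian_ker_const Lu y r; rewrite !mxE.
have rank_L : (n - 1 <= \rank L)%N.
  by have := mxrankS left_ker; rewrite mxrank_ker !mxrank_tr rank_ones; lia.
have L_ker : (L <= kermx ones)%MS by rewrite sub_kermx L_ones.
have L_eq : (L == kermx ones)%MS.
  rewrite -(mxrank_leqif_eq L_ker).2 mxrank_ker rank_ones eqn_leq rank_L andbT.
  by have := mxrankS L_ker; rewrite mxrank_ker rank_ones.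
rewrite (eqmxP L_eq) sub_kermx mulmxBl -!rowE.
by apply/eqP/matrixP => x y; rewrite !mxE subrr.
Qed.

End Laplacian.

Section ComplexParts.
Variables (R : rcfType) (p q s : nat).
Local Notation Re := (@complex.Re R).
Local Notation Im := (@complex.Im R).

Lemma map_mx_Re_mulmx (A : 'M[R]_(p, q)) (B : 'M[R[i]]_(q, s)) :
  map_mx Re (map_mx (real_complex R) A *m B) = A *m map_mx Re B.
Proof.
apply/matrixP => i j; rewrite !mxE (@big_morph _ _ Re 0 +%R 0 +%R) //; last first.
  by case=> ? ? [? ?].
by apply: eq_bigr => k _; rewrite !mxE; case: (B k j) => u v /=; ring.
Qed.

Lemma map_mx_Im_mulmx (A : 'M[R]_(p, q)) (B : 'M[R[i]]_(q, s)) :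
  map_mx Im (map_mx (real_complex R) A *m B) = A *m map_mx Im B.
Proof.
apply/matrixP => i j; rewrite !mxE (@big_morph _ _ Im 0 +%R 0 +%R) //; last first.
  by case=> ? ? [? ?].
by apply: eq_bigr => k _; rewrite !mxE; case: (B k j) => u v /=; ring.
Qed.

End ComplexParts.

Lemma prod_XsubC_split0 (F : fieldType) (rs : seq F) :
  \prod_(z <- rs) ('X - z%:P) =
  'X ^+ count (pred1 0) rs * \prod_(z <- rs | z != 0) ('X - z%:P).
Proof.
elim: rs => [|z rs IH]; first by rewrite !big_nil mulr1.
rewrite !big_cons IH /=; case: eqP => [->|_] /=.
  by rewrite subr0 exprS mulrA.
by rewrite add0n mulrCA.
Qed.

Section ComplexLaplacian.
Variables (R : realType) (n : nat) (a : 'M[R]_n.+1) (r : 'I_n.+1).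
Hypotheses (a_ge0 : forall i j, 0 <= a i j) (a_diag0 : forall i, a i i = 0).
Hypothesis r_root : forall i, connect (edge a) r i.
Local Notation L := (laplacian a).
Local Notation Lc := (map_mx (real_complex R) L).

Lemma complex_laplacian_sqr_ker p (B : 'M[R[i]]_(n.+1, p)) :
  Lc *m (Lc *m B) = 0 -> Lc *m B = 0.
Proof.
move=> LLB0.
have ReLB0 : map_mx (@complex.Re R) (Lc *m B) = 0.
  rewrite map_mx_Re_mulmx (laplacian_sqr_ker_mx a_ge0 a_diag0 r_root) //.
  by rewrite -!map_mx_Re_mulmx LLB0 map_mx0.
have ImLB0 : map_mx (@complex.Im R) (Lc *m B) = 0.
  rewrite map_mx_Im_mulmx (laplacian_sqr_ker_mx a_ge0 a_diag0 r_root) //.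
  by rewrite -!map_mx_Im_mulmx LLB0 map_mx0.
move: (Lc *m B) ReLB0 ImLB0 => D /matrixP ReD /matrixP ImD.
apply/matrixP => i j; move: (ReD i j) (ImD i j); rewrite !mxE.
by case: (D i j) => u v /= -> ->.
Qed.

Lemma complex_laplacian_expr_ker k (B : 'M[R[i]]_n.+1) :
  Lc ^+ k *m B = 0 -> Lc *m B = 0.
Proof.
elim: k B => [|k IH] B; first by rewrite expr0 mul1mx => ->; rewrite mulmx0.
by rewrite exprSr -mulmxE -mulmxA => /IH; exact: complex_laplacian_sqr_ker.
Qed.

Lemma laplacian_annihilator : exists2 zs : seq R[i],
  (forall z, z \in zs -> eigenvalueC L z /\ z != 0) &
  Lc *m \prod_(z <- zs) (Lc - z%:M) = 0.
Proof.
have [rs char_Lc] := closed_field_poly_normal (char_poly Lc).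
rewrite (monicP (char_poly_monic Lc)) scale1r in char_Lc.
exists [seq z <- rs | z != 0].
  move=> z; rewrite mem_filter => /andP[z_neq0 z_rs]; split => //.
  by rewrite /eigenvalueC map_char_poly char_Lc root_prod_XsubC.
have := Cayley_Hamilton Lc; rewrite char_Lc prod_XsubC_split0.
rewrite rmorphM rmorphXn /= horner_mx_X rmorph_prod big_filter mulmxE.
under eq_bigr => z _ do rewrite rmorphB /= horner_mx_X horner_mx_C.
by rewrite -mulmxE => /complex_laplacian_expr_ker; rewrite mulmxE.
Qed.

End ComplexLaplacian.

Lemma comm_prod_sub_scalar_mx (K : comNzRingType) k (M : 'M[K]_k.+1) (zs : seq K) :
  GRing.comm M (\prod_(z <- zs) (M - z%:M)).
Proof.
apply: commr_prod => z _.
by rewrite /GRing.comm mulrBl mulrBr -!mulmxE scalar_mxC.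
Qed.

Section PerturbedIteration.
Variables (R : realType) (k : nat) (M : 'M[R[i]]_k.+1) (c : R[i]).
Local Notation normc := (@Normc.normc R).

Definition perturbed_iteration (Y G : nat -> 'cV[R[i]]_k.+1) :=
  forall t, Y t.+1 = Y t - c *: (M *m Y t) + G t.

Lemma vanishes_of_factor (z : R[i]) (Y G : nat -> 'cV_k.+1) :
  normc (1 - c * z) < 1 ->
  perturbed_iteration Y G -> vanishes_mx G ->
  vanishes_mx (fun t => (M - z%:M) *m Y t) -> vanishes_mx Y.
Proof.
move=> z_contr Y_rec G0 E0 i j.
apply: (vanishes_contraction z_contr
  (g := fun t => G t i j + - c * ((M - z%:M) *m Y t) i j)).
  move=> t; rewrite Y_rec mulmxBl mul_scalar_mx !mxE; ring.
by apply: vanishesD; [exact: G0 | exact: vanishesMl].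
Qed.

Lemma vanishes_of_annihilator (zs : seq R[i]) (Y G : nat -> 'cV_k.+1) :
  (forall z, z \in zs -> normc (1 - c * z) < 1) ->
  perturbed_iteration Y G -> vanishes_mx G ->
  vanishes_mx (fun t => \prod_(z <- zs) (M - z%:M) *m Y t) -> vanishes_mx Y.
Proof.
elim: zs Y G => [|z zs IH] Y G zs_contr Y_rec G0.
  by under eq_fun do rewrite big_nil mul1mx.
set P := \prod_(w <- zs) (M - w%:M); have PM : P *m M = M *m P.
  by rewrite !mulmxE (comm_prod_sub_scalar_mx M zs).
move=> zzs0; apply: (IH Y G) => // [w w_zs|].
  by rewrite zs_contr // inE w_zs orbT.
apply: (@vanishes_of_factor z _ (fun t => P *m G t)).
- by rewrite zs_contr ?mem_head.
- by move=> t; rewrite Y_rec mulmxDr mulmxBr -scalemxAr !mulmxA PM.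
- exact: vanishes_mx_mull.
- by move: zzs0; under eq_fun do rewrite big_cons -mulmxE -mulmxA.
Qed.

End PerturbedIteration.

Lemma normc_1_sub_lt1 (R : realType) (h : R) (z : R[i]) : 0 < h ->
  h * (complex.Re z ^+ 2 + complex.Im z ^+ 2) < 2 * complex.Re z ->
  Normc.normc (1 - real_complex R h * z) < 1.
Proof.
case: z => u v h_gt0 /= eig_h; rewrite -[X in _ < X]sqrtr1 ltr_sqrt //=.
nra.
Qed.

Section Consensus.
Variables (R : realType) (n : nat) (a : 'M[R]_n.+1) (r : 'I_n.+1) (h : R).
Hypotheses (a_ge0 : forall i j, 0 <= a i j) (a_diag0 : forall i, a i i = 0).
Hypothesis r_root : forall i, connect (edge a) r i.
Local Notation L := (laplacian a).
Local Notation RC := (real_complex R).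
Local Notation Lc := (map_mx RC L).
Hypothesis h_gt0 : 0 < h.
Hypothesis h_eig : forall z, eigenvalueC L z -> z != 0 ->
  h * (complex.Re z ^+ 2 + complex.Im z ^+ 2) < 2 * complex.Re z.

Theorem perturbed_laplacian_consensus (v w : nat -> 'cV[R]_n.+1) :
  (forall t, v t.+1 = v t - h *: (L *m v t) + w t) ->
  (forall l, (fun t => w t l 0) @ \oo --> 0) ->
  forall i j, (fun t => v t i 0 - v t j 0) @ \oo --> 0.
Proof.
move=> v_rec w0 i j.
have LV_rec : perturbed_iteration Lc (RC h)
    (fun t => Lc *m map_mx RC (v t)) (fun t => Lc *m map_mx RC (w t)).
  move=> t; rewrite v_rec map_mxD map_mxB map_mxZ map_mxM.
  by rewrite mulmxDr mulmxBr -scalemxAr.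
have LW0 : vanishes_mx (fun t => Lc *m map_mx RC (w t)).
  apply: vanishes_mx_mull => l c; rewrite ord1.
  by under eq_fun do rewrite mxE; exact: vanishes_real.
have [zs zs_eig Lc_zs] := laplacian_annihilator a_ge0 a_diag0 r_root.
have LV0 : vanishes_mx (fun t => Lc *m map_mx RC (v t)).
  apply: vanishes_of_annihilator LV_rec LW0 _.
    by move=> z /zs_eig[z_eig z_neq0]; apply: normc_1_sub_lt1 => //; exact: h_eig.
  move=> l c; under eq_fun do rewrite mulmxA !mulmxE -comm_prod_sub_scalar_mx.
  by under eq_fun do rewrite -mulmxE Lc_zs mul0mx mxE; exact: vanishes0.
have Lv0 l : (fun t => (L *m v t) l 0) @ \oo --> 0.
  have := vanishes_Re (LV0 l 0).
  by under eq_fun do rewrite -map_mxM [X in complex.Re X]mxE.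
have [b delta_ij] := submxP (delta_diff_sub_laplacian a_ge0 a_diag0 r_root i j).
have vij t : v t i 0 - v t j 0 = \sum_l b 0 l * (L *m v t) l 0.
  have := congr1 (fun D => (D *m v t) 0 0) delta_ij.
  by rewrite /= mulmxBl -!rowE -mulmxA !mxE => ->.
under eq_fun do rewrite vij.
apply: cvg0_sum => l; have := cvgM (cvg_cst (b 0 l)) (Lv0 l); rewrite mulr0; exact.
Qed.

End Consensus.

Lemma cvg0_coord (R : realType) p q (f : nat -> 'M[R]_(p, q)) i j :
  f @ \oo --> (0 : 'M[R]_(p, q)) -> (fun t => f t i j) @ \oo --> 0.
Proof.
move=> f0; have := continuous_cvg _ (@coord_continuous _ _ _ i j 0) f0.
by rewrite mxE; exact.
Qed.

Lemma enorm_le_sum_abs (R : realType) m (v : 'rV[R]_m) :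
  enorm v <= \sum_k `|v 0 k|.
Proof.
have sum_ge0 : 0 <= \sum_k `|v 0 k| by rewrite sumr_ge0.
rewrite /enorm /dotv -(ger0_norm sum_ge0) -sqrtr_sqr ler_sqrt ?sqr_ge0 //.
rewrite expr2 mulr_suml; apply: ler_sum => k _.
rewrite -[v 0 k * _]ger0_norm -?expr2 ?sqr_ge0 // expr2 normrM ler_wpM2l //.
by rewrite (bigD1 k) //= lerDl sumr_ge0.
Qed.

Lemma protocol_coordinate_step (R : realType) n m (a : 'M[R]_n) h alpha beta
    dg P (x : nat -> 'I_n -> 'rV[R]_m) (k : 'I_m) :
  (forall i, a i i = 0) ->
  (forall t i, x t.+1 i = x t i + u_ a h alpha beta dg P x t i) ->
  forall t, \col_l x t.+1 l 0 k =
    \col_l x t l 0 k - h *: (laplacian a *m \col_l x t l 0 k)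
    + \col_l phi_ a h alpha beta dg P x t l 0 k.
Proof.
move=> a_diag0 x_step t.
have cons_col : \col_l cons_term a x t l 0 k = - (laplacian a *m \col_l x t l 0 k).
  apply/matrixP => l c; rewrite ord1 [RHS]mxE laplacian_mulmx // -sumrN.
  rewrite mxE /cons_term summxE; apply: eq_bigr => j _; rewrite !mxE; ring.
rewrite -scalerN -cons_col; apply/matrixP => l c.
by rewrite ord1 !mxE x_step /u_ !mxE addrA.
Qed.

Theorem proposition4 (R : realType) (n m : nat) (a : 'M[R]_n)
    (g : 'I_n -> 'rV[R]_m -> R) (X : 'I_n -> set 'rV[R]_m)
    (dg : 'I_n -> 'rV[R]_m -> 'rV[R]_m) (P : 'I_n -> 'rV[R]_m -> 'rV[R]_m)
    (h : R) (alpha beta : nat -> R) (x : nat -> 'I_n -> 'rV[R]_m) :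
  (forall i j, 0 <= a i j) ->
  (forall i, a i i = 0) ->
  has_spanning_tree a ->
  (forall i, convex_funv (g i)) ->
  (forall i, continuous (g i)) ->
  (forall i, closed (X i)) ->
  (forall i, convex_setv (X i)) ->
  (forall i y, is_subgradient (pos_part (g i)) y (dg i y)) ->
  (forall i v, is_proj (X i) v (P i v)) ->
  0 < h ->
  (forall z : R[i], eigenvalueC (laplacian a) z -> z != 0 ->
     h * (complex.Re z ^+ 2 + complex.Im z ^+ 2) < 2 * complex.Re z) ->
  (forall t i, x t.+1 i = x t i + u_ a h alpha beta dg P x t i) ->
  (forall i, phi_ a h alpha beta dg P x ^~ i @ \oo --> (0 : 'rV[R]_m)) ->
  forall i j, (fun t => enorm (x t i - x t j)) @ \oo --> 0.
Proof.
(* The convexity and projection data only act through [phi_], assumed to vanish. *)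
move=> a_ge0 a_diag0 [r r_root] _ _ _ _ _ _ h_gt0 h_eig x_step phi0 i j.
destruct n as [|n]; first by case: i.
have coord_consensus k : (fun t => x t i 0 k - x t j 0 k) @ \oo --> 0.
  have := perturbed_laplacian_consensus a_ge0 a_diag0 r_root h_gt0 h_eig
    (protocol_coordinate_step k a_diag0 x_step) _ i j.
  under eq_fun do rewrite !mxE; apply => l.
  by under eq_fun do rewrite mxE; exact: cvg0_coord.
apply: (@cvgr0_le _ _ _ (fun t => \sum_k `|x t i 0 k - x t j 0 k|)).
  move=> t; rewrite ger0_norm ?sqrtr_ge0 //; apply: le_trans (enorm_le_sum_abs _) _.
  by under eq_bigr do rewrite !mxE.
apply: cvg0_sum => k; have := cvg_norm (coord_consensus k); rewrite normr0; exact.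
Qed.
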